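(* Let $s,t,p\ge 1$, $A,B\in GL(n)$ and $Q\in\mathcal{P}(n)$ with $\lambda_1(Q)\le 1$. If the equation $X^s+A^*X^{-t}A+B^*X^{-p}B=Q$ has a Hermitian positive definite solution, then $$\rho^2(A)<\frac{q^q}{(q+1)^{q+1}}\quad\text{and}\quad \rho^2(B)<\frac{q^q}{(q+1)^{q+1}},\qquad\text{where } q=\min\{t/s,\,p/s\}.$$
   Context: $GL(n)$: $n\times n$ complex nonsingular matrices; $\mathcal{P}(n)$: $n\times n$ Hermitian positive definite matrices. For a Hermitian matrix $M$, $\lambda_1(M)$ is its largest and $\lambda_n(M)$ its smallest eigenvalue. $\rho(M)$ is the spectral radius. Real powers of positive definite matrices are defined by functional calculus. *)

From Stdlib Require Import Reals Lra Lia Arith.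
Open Scope R_scope.

Record C := mkC { re : R ; im : R }.
Definition C0 : C := mkC 0 0.
Definition C1 : C := mkC 1 0.
Definition RtoC (x : R) : C := mkC x 0.
Definition Cadd (a b : C) : C := mkC (re a + re b) (im a + im b).
Definition Cmul (a b : C) : C :=
  mkC (re a * re b - im a * im b) (re a * im b + im a * re b).
Definition Cconj (a : C) : C := mkC (re a) (- im a).
Definition Cmod (a : C) : R := sqrt (re a * re a + im a * im a).

Fixpoint Csum (n : nat) (f : nat -> C) : C :=
  match n with
  | O => C0
  | S m => Cadd (Csum m f) (f m)
  end.

(** An n x n matrix is a function of (row, column); only entries with
    indices < n matter.  Vectors of C^n are functions nat -> C. *)
Definition Mat := nat -> nat -> C.
Definition Vec := nat -> C.

Definition meq (n : nat) (M N : Mat) : Prop :=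
  forall i j, (i < n)%nat -> (j < n)%nat -> M i j = N i j.
Definition madd (M N : Mat) : Mat := fun i j => Cadd (M i j) (N i j).
Definition mmul (n : nat) (M N : Mat) : Mat :=
  fun i j => Csum n (fun k => Cmul (M i k) (N k j)).
Definition madj (M : Mat) : Mat := fun i j => Cconj (M j i).
Definition mid : Mat := fun i j => if Nat.eqb i j then C1 else C0.
Definition mdiag (d : nat -> R) : Mat :=
  fun i j => if Nat.eqb i j then RtoC (d i) else C0.
Definition mvec (n : nat) (M : Mat) (v : Vec) : Vec :=
  fun i => Csum n (fun k => Cmul (M i k) (v k)).
Definition inner (n : nat) (u v : Vec) : C :=
  Csum n (fun k => Cmul (Cconj (u k)) (v k)).
Definition vnonzero (n : nat) (v : Vec) : Prop :=
  exists i, (i < n)%nat /\ v i <> C0.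

Definition invertible (n : nat) (M : Mat) : Prop :=
  exists N, meq n (mmul n M N) mid /\ meq n (mmul n N M) mid.
Definition unitary (n : nat) (U : Mat) : Prop :=
  meq n (mmul n U (madj U)) mid /\ meq n (mmul n (madj U) U) mid.
Definition hermitian (n : nat) (M : Mat) : Prop :=
  forall i j, (i < n)%nat -> (j < n)%nat -> M i j = Cconj (M j i).
Definition posdef (n : nat) (M : Mat) : Prop :=
  hermitian n M /\
  forall v, vnonzero n v -> 0 < re (inner n v (mvec n M v)).

Definition eigenvalue (n : nat) (M : Mat) (l : C) : Prop :=
  exists v, vnonzero n v /\ forall i, (i < n)%nat -> mvec n M v i = Cmul l (v i).

Definition is_lambda_max (n : nat) (M : Mat) (l : R) : Prop :=
  eigenvalue n M (RtoC l) /\ forall l', eigenvalue n M (RtoC l') -> l' <= l.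

Definition is_spectral_radius (n : nat) (M : Mat) (r : R) : Prop :=
  (exists l, eigenvalue n M l /\ Cmod l = r) /\
  forall l, eigenvalue n M l -> Cmod l <= r.

(** Real powers of a positive definite matrix by functional calculus:
    mpow_is n X a Y  means  Y = X^a, i.e. X = U diag(d) U^* with U unitary and
    d > 0, and Y = U diag(d^a) U^*. *)
Definition mpow_is (n : nat) (X : Mat) (a : R) (Y : Mat) : Prop :=
  exists (U : Mat) (d : nat -> R),
    unitary n U /\ (forall i, (i < n)%nat -> 0 < d i) /\
    meq n X (mmul n (mmul n U (mdiag d)) (madj U)) /\
    meq n Y (mmul n (mmul n U (mdiag (fun i => Rpower (d i) a))) (madj U)).

(* Let X > 0 solve the equation, where lambda_1(Q) <= 1, and let A y = lam y
   with y <> 0.  Since Q <= I,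
     y^* X^s y + |lam|^2 y^* X^(-t) y + (B y)^* X^(-p) (B y) <= |y|^2,
   and the last term is positive because B is invertible.  Writing a for the
   Rayleigh quotient y^* X y / |y|^2, Jensen's inequality for the convex power
   functions d |-> d^s (s >= 1) and d |-> d^(-t), applied in an eigenbasis of X,
   gives y^* X^s y >= |y|^2 a^s and y^* X^(-t) y >= |y|^2 a^(-t).  Hence
   a^s + |lam|^2 a^(-t) < 1, and an elementary one-variable estimate (the maximum
   of u^q (1 - u) on (0,1) is q^q / (q+1)^(q+1)) yields |lam|^2 < q^q/(q+1)^(q+1)
   for q <= t/s.  Exchanging the roles of A and B gives the bound for B. *)

From Pilot Require Import Defs.
From Stdlib Require Import Reals Lra.
From mathcomp Require Import all_boot all_order all_algebra.
From mathcomp Require Import Rstruct complex.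
Set Implicit Arguments. Unset Strict Implicit. Unset Printing Implicit Defensive.
Import Order.TTheory GRing.Theory Num.Theory.

Open Scope R_scope.

Lemma Rpower_gt0 x e : 0 < Rpower x e.
Proof. exact: exp_pos. Qed.

Lemma ln_le_sub1 y : 0 < y -> ln y <= y - 1.
Proof. by move=> y_gt0; have := exp_ineq1_le (ln y); rewrite exp_ln //; lra. Qed.

(** For
    [e <= 0] it follows from [exp x >= 1 + x] and [ln y <= y - 1]; for
    [e >= 1] from [y^e = y * y^(e-1)] and [ln y >= 1 - 1/y]. *)
Lemma bernoulli_real e y : (e <= 0 \/ 1 <= e) -> 0 < y ->
  1 + e * (y - 1) <= Rpower y e.
Proof.
move=> he y_gt0.
have yV : y * / y = 1 by field; lra.
have ln_lb : 1 - / y <= ln y.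
  by have := ln_le_sub1 (Rinv_0_lt_compat _ y_gt0); rewrite ln_Rinv //; lra.
have ln_ub := ln_le_sub1 y_gt0.
case: he => [e_le0 | e_ge1].
  have := exp_ineq1_le (e * ln y); rewrite /Rpower => exp_lb.
  have : 0 <= - e * (y - 1 - ln y) by apply: Rmult_le_pos; lra.
  lra.
have -> : Rpower y e = y * Rpower y (e - 1).
  by rewrite -{2}(Rpower_1 y y_gt0) -Rpower_plus; congr Rpower; ring.
have := exp_ineq1_le ((e - 1) * ln y); rewrite /Rpower => exp_lb.
have : 0 <= (e - 1) * (ln y - (1 - / y)) by apply: Rmult_le_pos; lra.
nra.
Qed.

(** The tangent at [a] lies below the convex function [d |-> d^e], obtained
    by rescaling Bernoulli's inequality at [y = d / a]. *)
Lemma power_tangent e a d : (e <= 0 \/ 1 <= e) -> 0 < a -> 0 < d ->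
  Rpower a e + e * Rpower a (e - 1) * (d - a) <= Rpower d e.
Proof.
move=> he a_gt0 d_gt0.
have da_gt0 : 0 < d / a by apply: Rdiv_lt_0_compat.
have -> : Rpower d e = Rpower a e * Rpower (d / a) e.
  by rewrite Rpower_mult_distr //; congr Rpower; field; lra.
have -> : Rpower a (e - 1) = Rpower a e / a.
  by rewrite Rpower_plus Rpower_Ropp Rpower_1.
have := bernoulli_real he da_gt0; have := Rpower_gt0 a e.
set P := Rpower a e => P_gt0 hb.
have -> : P + e * (P / a) * (d - a) = P * (1 + e * (d / a - 1)) by field; lra.
exact: Rmult_le_compat_l (Rlt_le _ _ P_gt0) hb.
Qed.

(** [power_peak q = q^q / (q+1)^(q+1)] is the maximum of [u |-> u^q (1 - u)]
    on [(0,1)]; it is the bound appearing in the theorem. *)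
Definition power_peak q := Rpower q q / Rpower (q + 1) (q + 1).

(** The maximum property: with [v = u (q+1) / q], Bernoulli's inequality for
    the exponent [-q] gives [v^q (1 + q - q v) <= 1], which rescales to the
    claim. *)
Lemma power_peak_ge q u : 0 < q -> 0 < u < 1 ->
  Rpower u q * (1 - u) <= power_peak q.
Proof.
move=> q_gt0 [u_gt0 u_lt1].
pose v := u * (q + 1) / q.
have v_gt0 : 0 < v by apply: Rdiv_lt_0_compat; nra.
have uv : Rpower u q * Rpower (q + 1) q = Rpower q q * Rpower v q.
  rewrite !Rpower_mult_distr //; try lra; congr Rpower; rewrite /v; field; lra.
have Hplus : Rpower (q + 1) (q + 1) = Rpower (q + 1) q * (q + 1).
  by rewrite Rpower_plus Rpower_1 //; lra.
have hb : Rpower v q * (1 + q - q * v) <= 1.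
  have := bernoulli_real (or_introl (Rlt_le (-q) 0 ltac:(lra))) v_gt0.
  rewrite Rpower_Ropp => hb; have V_gt0 := Rpower_gt0 v q.
  have VV : Rpower v q * / Rpower v q = 1 by field; lra.
  have := Rmult_le_compat_l _ _ _ (Rlt_le _ _ V_gt0) hb; lra.
have qv : 1 + q - q * v = (q + 1) * (1 - u) by rewrite /v; field; lra.
rewrite qv in hb.
rewrite /power_peak Hplus.
have Q1_gt0 := Rpower_gt0 (q + 1) q.
apply: (Rmult_le_reg_r (Rpower (q + 1) q * (q + 1))); first nra.
have -> : Rpower q q / (Rpower (q + 1) q * (q + 1)) * (Rpower (q + 1) q * (q + 1))
          = Rpower q q by field; lra.
have -> : Rpower u q * (1 - u) * (Rpower (q + 1) q * (q + 1))
          = Rpower q q * Rpower v q * ((q + 1) * (1 - u)) by rewrite -uv; ring.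
have := Rpower_gt0 q q; nra.
Qed.

(** The scalar core of the theorem: if [a^s + m a^(-t) < 1] for some [a > 0],
    then [u = a^s] lies in [(0,1)] and [m < (1 - u) a^t <= (1 - u) u^q], so [m]
    is below the peak whenever [q s <= t]. *)
Lemma scalar_bound a s t q m : 0 < a -> 0 < s -> 0 < q -> q * s <= t -> 0 <= m ->
  Rpower a s + m * Rpower a (- t) < 1 -> m < power_peak q.
Proof.
move=> a_gt0 s_gt0 q_gt0 qs_le_t m_ge0 h.
have u_gt0 := Rpower_gt0 a s; have at_gt0 := Rpower_gt0 a t.
rewrite Rpower_Ropp in h.
have atV : Rpower a t * / Rpower a t = 1 by field; lra.
have u_lt1 : Rpower a s < 1.
  have : 0 <= m * / Rpower a t.
    by apply: Rmult_le_pos => //; apply/Rlt_le/Rinv_0_lt_compat.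
  lra.
have ln_a_lt0 : ln a < 0.
  apply: Rnot_le_lt => ln_a_ge0; move: u_lt1; rewrite /Rpower.
  have := exp_ineq1_le (s * ln a); nra.
have at_le : Rpower a t <= Rpower (Rpower a s) q.
  rewrite Rpower_mult /Rpower; case: (Req_dec (t * ln a) (s * q * ln a)) => [-> | ne]; first lra.
  by apply: Rlt_le; apply: exp_increasing; nra.
have := power_peak_ge q_gt0 (conj u_gt0 u_lt1).
nra.
Qed.


From mathcomp Require Import ring lra.
Local Open Scope ring_scope.
Local Open Scope sesquilinear_scope.
Local Open Scope complex_scope.

Section QuadraticForms.
Variable n : nat.
Implicit Types (M U : 'M[R[i]]_n) (y w : 'cV[R[i]]_n) (e d : 'I_n -> R).

Definition nsq (z : R[i]) : R := complex.Re z ^+ 2 + complex.Im z ^+ 2.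
Definition sqnorm w : R := \sum_i nsq (w i 0).

Definition qform M y : R := complex.Re ((y^t* *m M *m y) 0 0).

Definition specmx U e : 'M[R[i]]_n := U *m diag_mx (\row_i (e i)%:C) *m U^t*.

Lemma nsqE z : (nsq z)%:C = `|z| ^+ 2.
Proof. exact: add_Re2_Im2. Qed.

Lemma nsq_ge0 z : 0 <= nsq z.
Proof. by rewrite /nsq addr_ge0 // sqr_ge0. Qed.

Lemma nsq_gt0 z : z != 0 -> 0 < nsq z.
Proof. by move=> z_neq0; rewrite -ltcR nsqE exprn_gt0 // normr_gt0. Qed.

Lemma ReD (a b : R[i]) : complex.Re (a + b) = complex.Re a + complex.Re b.
Proof. by case: a; case: b. Qed.

Lemma Re_realM (r : R) (z : R[i]) : complex.Re (r%:C * z) = r * complex.Re z.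
Proof. by case: z => zr zi /=; ring. Qed.

Lemma qformD M1 M2 y : qform (M1 + M2) y = qform M1 y + qform M2 y.
Proof. by rewrite /qform mulmxDr mulmxDl mxE ReD. Qed.

Lemma qform_conj (A : 'M[R[i]]_n) M y : qform (A^t* *m M *m A) y = qform M (A *m y).
Proof. by rewrite /qform trmx_mul map_mxM !mulmxA. Qed.

Lemma qformZ M (c : R[i]) y : qform M (c *: y) = nsq c * qform M y.
Proof.
rewrite /qform.
have -> : (c *: y)^t* = c^* *: y^t* by apply/matrixP => i j; rewrite !mxE rmorphM.
rewrite -scalemxAl -scalemxAl -scalemxAr !mxE mulrA -normCKC -nsqE.
by rewrite Re_realM.
Qed.

Lemma diag_form w e :
  (w^t* *m diag_mx (\row_i (e i)%:C) *m w) 0 0 = (\sum_i e i * nsq (w i 0))%:C.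
Proof.
rewrite mul_mx_diag mxE rmorph_sum; apply: eq_bigr => k _.
by rewrite !mxE rmorphM /= nsqE normCKC; ring.
Qed.

Lemma qform_specmx U e y : qform (specmx U e) y = \sum_i e i * nsq ((U^t* *m y) i 0).
Proof.
rewrite /qform /specmx.
have -> : y^t* *m (U *m diag_mx (\row_i (e i)%:C) *m U^t*) *m y
          = (U^t* *m y)^t* *m diag_mx (\row_i (e i)%:C) *m (U^t* *m y).
  by rewrite trmx_mul map_mxM trmxCK !mulmxA.
by rewrite diag_form.
Qed.

Lemma qform1 y : qform 1%:M y = sqnorm y.
Proof.
have -> : 1%:M = diag_mx (\row_i (1 : R)%:C) :> 'M[R[i]]_n.
  by rewrite -diag_const_mx; congr diag_mx; apply/matrixP => i j; rewrite !mxE.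
by rewrite /qform diag_form; under eq_bigr do rewrite mul1r.
Qed.

Lemma sqnorm_unitary U y : U \is unitarymx -> sqnorm (U^t* *m y) = sqnorm y.
Proof. by move=> /unitarymxP HU; rewrite -qform1 -qform_conj trmxCK mulmx1 HU qform1. Qed.

Lemma nonzero_entry w : w != 0 -> exists i, w i 0 != 0.
Proof.
move=> w_neq0; case: (pickP (fun i => w i 0 != 0)) => [i wi_neq0 | w_eq0]; first by exists i.
move/eqP: w_neq0; case; apply/matrixP => i j; rewrite (ord1 j) mxE.
by apply/eqP; rewrite -[_ == _]negbK w_eq0.
Qed.

Lemma weighted_sum_gt0 e w : (forall i, 0 < e i) -> w != 0 ->
  0 < \sum_i e i * nsq (w i 0).
Proof.
move=> e_gt0 /nonzero_entry [i wi_neq0].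
rewrite (bigD1 i) //=.
have : 0 < e i * nsq (w i 0) by rewrite mulr_gt0 // nsq_gt0.
have : 0 <= \sum_(j | j != i) e j * nsq (w j 0).
  by apply: sumr_ge0 => j _; rewrite mulr_ge0 ?nsq_ge0 // ltW.
lra.
Qed.

Lemma sqnorm_ge0 w : 0 <= sqnorm w.
Proof. by apply: sumr_ge0 => i _; apply: nsq_ge0. Qed.

Lemma sqnorm_gt0 w : w != 0 -> 0 < sqnorm w.
Proof.
move=> w_neq0; have := @weighted_sum_gt0 (fun _ => 1) w (fun=> ltr01) w_neq0.
by under eq_bigr do rewrite mul1r.
Qed.

Lemma unitary_adj_neq0 U y : U \is unitarymx -> y != 0 -> U^t* *m y != 0.
Proof.
move=> /unitarymxP HU; apply: contraNneq => Uy_eq0.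
by rewrite -[y]mul1mx -HU -mulmxA Uy_eq0 mulmx0.
Qed.

Lemma qform_specmx_gt0 U e y : U \is unitarymx -> (forall i, 0 < e i) -> y != 0 ->
  0 < qform (specmx U e) y.
Proof.
by move=> HU e_gt0 y_neq0; rewrite qform_specmx weighted_sum_gt0 // unitary_adj_neq0.
Qed.

(** Summing the tangent inequality at [a]. *)
Lemma power_jensen (c d : 'I_n -> R) (a e : R) :
  (forall i, 0 <= c i) -> (forall i, 0 < d i) -> (e <= 0 \/ 1 <= e) -> 0 < a ->
  \sum_i d i * c i = a * \sum_i c i ->
  (\sum_i c i) * Rpower a e <= \sum_i Rpower (d i) e * c i.
Proof.
move=> c_ge0 d_gt0 he a_gt0 mean.
pose K := e * Rpower a (e - 1).
have tangent i : (Rpower a e + K * (d i - a)) * c i <= Rpower (d i) e * c i.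
  rewrite ler_wpM2r //; apply/RleP/power_tangent; try exact/RltP.
  by case: he => /RleP; auto.
apply: le_trans (ler_sum _ (fun i _ => tangent i)).
have -> : \sum_i (Rpower a e + K * (d i - a)) * c i
          = Rpower a e * \sum_i c i + K * (\sum_i d i * c i - a * \sum_i c i).
  rewrite mulrBr !mulr_sumr -sumrB -big_split /=; apply: eq_bigr => i _; ring.
by rewrite mean subrr mulr0 addr0 mulrC.
Qed.

Lemma qform_specmx_jensen U d (e a : R) y :
  U \is unitarymx -> (forall i, 0 < d i) -> (e <= 0 \/ 1 <= e) -> 0 < a ->
  qform (specmx U d) y = a * sqnorm y ->
  sqnorm y * Rpower a e <= qform (specmx U (fun i => Rpower (d i) e)) y.
Proof.
move=> HU d_gt0 he a_gt0; rewrite !qform_specmx -(sqnorm_unitary y HU) => mean.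
exact: power_jensen (fun i => nsq_ge0 _) d_gt0 he a_gt0 mean.
Qed.
End QuadraticForms.

Section Spectral.
Variable n : nat.
Implicit Types (M Q U X Y : 'M[R[i]]_n) (y v : 'cV[R[i]]_n) (mu d : 'I_n -> R).

Lemma unitary_adjK U : U \is unitarymx -> U^t* *m U = 1%:M.
Proof. by move=> HU; rewrite -[LHS]mul1mx mulmxA mulmxKtV. Qed.

Lemma hermitian_specmx Q : Q \is hermsymmx ->
  exists U mu, U \is unitarymx /\ Q = specmx U mu.
Proof.
move=> HQ; pose P := spectralmx Q; pose D := spectral_diag Q.
have P_unitary : P \is unitarymx := spectral_unitarymx Q.
have Q_eq : Q = P^t* *m diag_mx D *m P.
  by rewrite -invmx_unitary //; apply/orthomx_spectralP/hermitian_normalmx.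
have D_real k : D 0 k = (complex.Re (D 0 k))%:C.
  by rewrite RRe_real //; move/mxOverP: (hermitian_spectral_diag_real HQ); apply.
exists (P^t*), (fun k => complex.Re (D 0 k)); split; first by rewrite trmxC_unitary.
rewrite Q_eq /specmx trmxCK; congr (_ *m diag_mx _ *m _).
by apply/matrixP => i j; rewrite !mxE (ord1 i) -D_real.
Qed.

Lemma specmx_eigenvector U mu k : U \is unitarymx ->
  U *m delta_mx k (0 : 'I_1) != 0 /\
  specmx U mu *m (U *m delta_mx k (0 : 'I_1)) = (mu k)%:C *: (U *m delta_mx k (0 : 'I_1)).
Proof.
move=> /unitary_adjK UtU; split.
  apply/eqP => /(congr1 (mulmx (U^t*))); rewrite mulmxA UtU mul1mx mulmx0.
  by move/matrixP/(_ k 0); rewrite !mxE !eqxx /= => /eqP; rewrite oner_eq0.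
rewrite /specmx -!mulmxA [U^t* *m (U *m _)]mulmxA UtU mul1mx scalemxAr.
congr (_ *m _); apply/matrixP => i j; rewrite mul_diag_mx !mxE (ord1 j) eqxx andbT.
by case: (eqVneq i k) => [->|_]; rewrite ?mulr1n ?mulr0n ?mulr0 ?mulr1.
Qed.

Lemma specmx_eigenvalue U mu (l : R) v : U \is unitarymx -> v != 0 ->
  specmx U mu *m v = l%:C *: v -> exists i, l = mu i.
Proof.
move=> HU v_neq0 Hv; have UtU := unitary_adjK HU.
have Dw : diag_mx (\row_i (mu i)%:C) *m (U^t* *m v) = l%:C *: (U^t* *m v).
  by rewrite scalemxAr -Hv /specmx !mulmxA UtU mul1mx.
have [i wi_neq0] := nonzero_entry (unitary_adj_neq0 HU v_neq0).
move: Dw wi_neq0; set w := U^t* *m v; clearbody w => Dw wi_neq0.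
exists i; have := congr1 (fun M : 'cV_n => M i 0) Dw.
by rewrite mul_diag_mx !mxE => /(mulIf wi_neq0) /complexI ->.
Qed.

Lemma qform_specmx_le U mu (l : R) y : U \is unitarymx -> (forall i, mu i <= l) ->
  qform (specmx U mu) y <= l * sqnorm y.
Proof.
move=> HU mu_le; rewrite qform_specmx -(sqnorm_unitary y HU) mulr_sumr.
by apply: ler_sum => i _; rewrite ler_wpM2r ?nsq_ge0.
Qed.

Definition is_rpow X (e : R) Y := exists U d,
  [/\ U \is unitarymx, forall i, 0 < d i, X = specmx U d &
      Y = specmx U (fun i => Rpower (d i) e)].

Lemma rpow_qform_gt0 X e Y y : is_rpow X e Y -> y != 0 ->
  0 < qform X y /\ 0 < qform Y y.
Proof.
case=> U [d [HU d_gt0 -> ->]] y_neq0.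
by split; apply: qform_specmx_gt0 => // i; apply/RltP/Rpower_gt0.
Qed.

Lemma rpow_jensen X e Y (a : R) y : is_rpow X e Y -> (e <= 0 \/ 1 <= e) -> 0 < a ->
  qform X y = a * sqnorm y -> sqnorm y * Rpower a e <= qform Y y.
Proof. by case=> U [d [HU d_gt0 -> ->]]; apply: qform_specmx_jensen. Qed.

(** Let [Q = X^s + A^* X^(-t) A + B^* X^(-p) B] with
    [Q <= I] along an eigenvector [y] of [A] for the eigenvalue [lam], and let
    [a > 0] be the Rayleigh quotient of [X] at [y].  Jensen bounds the first two
    terms below by [|y|^2 a^s] and [|lam|^2 |y|^2 a^(-t)], while the third term
    is positive as [B y <> 0]; hence [a^s + |lam|^2 a^(-t) < 1]. *)
Lemma eigenvector_energy (A B Q X Xs Xt Xp : 'M[R[i]]_n) (s t p : R) y (lam : R[i]) :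
  1 <= s -> 0 <= t ->
  is_rpow X s Xs -> is_rpow X (- t) Xt -> is_rpow X (- p) Xp ->
  Q = Xs + (A^t* *m Xt *m A + B^t* *m Xp *m B) -> B \in unitmx ->
  y != 0 -> A *m y = lam *: y -> qform Q y <= sqnorm y ->
  exists2 a : R, 0 < a & Rpower a s + nsq lam * Rpower a (- t) < 1.
Proof.
move=> s_ge1 t_ge0 HXs HXt HXp Q_eq B_unit y_neq0 Ay energy.
have y_gt0 := sqnorm_gt0 y_neq0.
have [X_gt0 _] := rpow_qform_gt0 HXs y_neq0.
pose a := qform X y / sqnorm y.
have a_gt0 : 0 < a by rewrite divr_gt0.
have mean : qform X y = a * sqnorm y by rewrite /a divfK // gt_eqF.
have Js : sqnorm y * Rpower a s <= qform Xs y.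
  by apply: rpow_jensen HXs _ a_gt0 mean; right.
have Jt : sqnorm y * Rpower a (- t) <= qform Xt y.
  by apply: rpow_jensen HXt _ a_gt0 mean; left; rewrite oppr_le0.
have By_neq0 : B *m y != 0.
  apply: contraNneq y_neq0 => By_eq0.
  by rewrite -[y]mul1mx -(mulVmx B_unit) -mulmxA By_eq0 mulmx0.
have [_ P_gt0] := rpow_qform_gt0 HXp By_neq0.
exists a => //; move: energy.
rewrite Q_eq !qformD !qform_conj Ay qformZ -(ltr_pM2l y_gt0) mulr1 mulrDr => energy.
have := ler_wpM2l (nsq_ge0 lam) Jt; lra.
Qed.
End Spectral.

Definition c2C (a : Defs.C) : R[i] := re a +i* im a.
Definition C2c (z : R[i]) : Defs.C := mkC (complex.Re z) (complex.Im z).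

Lemma C2cK z : c2C (C2c z) = z. Proof. by case: z. Qed.

Lemma c2C_inj : injective c2C.
Proof. by case=> [a1 a2] [b1 b2] [-> ->]. Qed.

Lemma c2C_sum n f : c2C (Csum n f) = \sum_(i < n) c2C (f i).
Proof. by elim: n => [|n IH]; rewrite ?big_ord0 // big_ord_recr /= -IH. Qed.

Definition toM n (M : Mat) : 'M[R[i]]_n := \matrix_(i, j) c2C (M i j).
Definition toV n (v : Vec) : 'cV[R[i]]_n := \col_i c2C (v i).
Definition ofV n (x : 'cV[R[i]]_n) : Vec :=
  fun i => if insub i is Some k then C2c (x k 0) else C0.

Lemma ofVK n (x : 'cV[R[i]]_n) : toV n (ofV x) = x.
Proof. by apply/matrixP => i j; rewrite !mxE /ofV (ord1 j) valK C2cK. Qed.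

Lemma toM_mul n M N : toM n (mmul n M N) = toM n M *m toM n N.
Proof.
apply/matrixP => i j; rewrite !mxE c2C_sum.
by apply: eq_bigr => k _; rewrite !mxE.
Qed.

Lemma toM_add n M N : toM n (madd M N) = toM n M + toM n N.
Proof. by apply/matrixP => i j; rewrite !mxE. Qed.

Lemma toM_adj n M : toM n (madj M) = (toM n M)^t*.
Proof. by apply/matrixP => i j; rewrite !mxE. Qed.

Lemma toM_diag n d : toM n (mdiag d) = diag_mx (\row_i (d i)%:C).
Proof.
apply/matrixP => i j; rewrite !mxE /mdiag.
case: (PeanoNat.Nat.eqb_spec i j) => [/val_inj -> | ij_neq]; first by rewrite eqxx mulr1n.
by rewrite (introF eqP) ?mulr0n // => ij_eq; apply: ij_neq; rewrite ij_eq.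
Qed.

Lemma toM_id n : toM n mid = 1%:M.
Proof.
rewrite -diag_const_mx -[mid]/(mdiag (fun=> 1%R)) toM_diag; congr diag_mx.
by apply/matrixP => i j; rewrite !mxE.
Qed.

Lemma meq_toM n M N : meq n M N -> toM n M = toM n N.
Proof. by move=> MN; apply/matrixP => i j; rewrite !mxE MN //; apply/ssrnat.ltP. Qed.

Lemma toV_mvec n M v : toV n (mvec n M v) = toM n M *m toV n v.
Proof.
apply/matrixP => i j; rewrite !mxE c2C_sum.
by apply: eq_bigr => k _; rewrite !mxE.
Qed.

Lemma toV_neq0 n v : vnonzero n v <-> toV n v != 0.
Proof.
split=> [[i [/ssrnat.ltP i_lt vi_neq0]] | v_neq0].
  apply/eqP => /matrixP /(_ (Ordinal i_lt) 0); rewrite !mxE => vi_eq.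
  by apply: vi_neq0; apply: c2C_inj.
have [k] := nonzero_entry v_neq0.
rewrite mxE => vk_neq0; exists k; split; first exact/ssrnat.ltP.
by move=> vk_eq; rewrite vk_eq eqxx in vk_neq0.
Qed.

Lemma eigenvalue_toM n M l : Defs.eigenvalue n M l <->
  exists2 x : 'cV[R[i]]_n, x != 0 & toM n M *m x = c2C l *: x.
Proof.
split=> [[v [/toV_neq0 v_neq0 Mv]] | [x x_neq0 Mx]].
  exists (toV n v) => //; apply/matrixP => i j.
  by rewrite -toV_mvec !mxE Mv //; apply/ssrnat.ltP.
exists (ofV x); split; first by apply/toV_neq0; rewrite ofVK.
move=> i /ssrnat.ltP i_lt; apply: c2C_inj.
have := congr1 (fun y : 'cV[R[i]]_n => y (Ordinal i_lt) 0) Mx.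
rewrite -{1}(ofVK x) -toV_mvec !mxE => ->.
by rewrite -[in LHS](ofVK x) mxE.
Qed.

Lemma hermitian_toM (n : nat) (Q : Mat) : Defs.hermitian n Q -> toM n Q \is hermsymmx.
Proof.
move=> HQ; apply/is_hermitianmxP; rewrite expr0 scale1r.
by apply/matrixP => i j; rewrite !mxE HQ //; apply/ssrnat.ltP.
Qed.

Lemma unitary_toM n U : unitary n U -> toM n U \is unitarymx.
Proof. by case=> UU _; apply/unitarymxP; rewrite -toM_adj -toM_mul -toM_id (meq_toM UU). Qed.

Lemma invertible_toM n B : invertible n B -> toM n B \in unitmx.
Proof. by case=> N [/meq_toM]; rewrite toM_mul toM_id => /mulmx1_unit []. Qed.

Lemma mpow_toM n X e Y : mpow_is n X e Y -> is_rpow (toM n X) e (toM n Y).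
Proof.
case=> U [d [HU [d_gt0 [HX HY]]]]; exists (toM n U), (fun i => d i); split.
- exact: unitary_toM.
- by move=> i; apply/RltP/d_gt0/ssrnat.ltP.
- by rewrite (meq_toM HX) !toM_mul toM_adj toM_diag.
- by rewrite (meq_toM HY) !toM_mul toM_adj toM_diag.
Qed.

Lemma cV_neq0_dim n (x : 'cV[R[i]]_n) : x != 0 -> (0 < n)%N.
Proof. by case: n x => [|n] x //; rewrite flatmx0 eqxx. Qed.

Lemma nsq_Cmod l : nsq (c2C l) = Cmod l ^+ 2.
Proof.
rewrite /nsq /Cmod /= [in RHS]expr2 -[in RHS]RmultE sqrt_sqrt; first by rewrite !expr2.
by apply: Rplus_le_le_0_compat; apply: Rle_0_sqr.
Qed.

(** [lambda_1(Q) <= 1] means [Q <= I]: the largest eigenvalue of the Hermitian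
    [Q] is one of its eigenvalues in the sense of [Defs], so the Rayleigh bound
    applies. *)
Lemma qform_le_sqnorm n (Q : Mat) : (0 < n)%N -> Defs.hermitian n Q ->
  (forall l1, is_lambda_max n Q l1 -> Rle l1 1) ->
  forall y : 'cV[R[i]]_n, qform (toM n Q) y <= sqnorm y.
Proof.
move=> n_gt0 /hermitian_toM /hermitian_specmx [U [mu [HU Q_eq]]] lmax_le1 y.
have [k0 _ mu_max] := @arg_maxP _ R _ (Ordinal n_gt0) xpredT mu isT.
have mu_lmax : is_lambda_max n Q (mu k0).
  split=> [|l /eigenvalue_toM [v v_neq0 Qv]].
    have [v_neq0 Qv] := specmx_eigenvector mu k0 HU.
    by apply/eigenvalue_toM; exists (U *m delta_mx k0 0); rewrite // Q_eq.
  rewrite Q_eq in Qv; have [i /= ->] := specmx_eigenvalue HU v_neq0 Qv.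
  exact/RleP/mu_max.
rewrite Q_eq; apply: le_trans (qform_specmx_le y HU (fun i => mu_max i isT)) _.
by rewrite ler_piMl ?sqnorm_ge0 //; apply/RleP/lmax_le1.
Qed.

(** The bound for [rho(B)] is the same statement
    with the roles of [(A, t)] and [(B, p)] exchanged. *)
Lemma eigenvalue_bound n (s t p q r : R) (A B Q X Xs Xt Xp : Mat) :
  1 <= s -> 0 <= t -> 0 < q -> q * s <= t ->
  invertible n B -> Defs.hermitian n Q -> (forall l1, is_lambda_max n Q l1 -> Rle l1 1) ->
  mpow_is n X s Xs -> mpow_is n X (- t) Xt -> mpow_is n X (- p) Xp ->
  toM n Q = toM n Xs + ((toM n A)^t* *m toM n Xt *m toM n A +
                        (toM n B)^t* *m toM n Xp *m toM n B) ->
  is_spectral_radius n A r -> r ^+ 2 < power_peak q.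
Proof.
move=> s_ge1 t_ge0 q_gt0 qs_le_t HB HQ lmax_le1 HXs HXt HXp Q_eq [[l [Hl <-]] _].
have [x x_neq0 Ax] := proj1 (eigenvalue_toM _ _ _) Hl.
have energy := qform_le_sqnorm (cV_neq0_dim x_neq0) HQ lmax_le1 x.
have [a a_gt0] := eigenvector_energy s_ge1 t_ge0 (mpow_toM HXs) (mpow_toM HXt)
  (mpow_toM HXp) Q_eq (invertible_toM HB) x_neq0 Ax energy.
rewrite nsq_Cmod => ineq.
apply/RltP; apply: (@scalar_bound a s t q).
- exact/RltP.
- by apply/RltP; apply: lt_le_trans s_ge1.
- exact/RltP.
- exact/RleP.
- exact/RleP/sqr_ge0.
- exact/RltP.
Qed.

Lemma min_ratio_pos (s t p : R) : 0 < s -> 0 < t -> 0 < p -> 0 < Rmin (t / s) (p / s).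
Proof. by move=> s_gt0 t_gt0 p_gt0; rewrite RminE lt_min !divr_gt0. Qed.

Lemma min_ratio_le (s t p : R) : 0 < s -> Rmin (t / s) (p / s) * s <= t.
Proof.
move=> s_gt0.
by rewrite RminE -[leRHS](divfK (lt0r_neq0 s_gt0)) ler_wpM2r ?ge_min ?lexx // ltW.
Qed.

Open Scope R_scope.
Theorem mainTheorem2 :
  forall (n : nat) (s t p : R) (A B Q : Mat),
    1 <= s -> 1 <= t -> 1 <= p ->
    invertible n A -> invertible n B ->
    posdef n Q ->
    (forall l1, is_lambda_max n Q l1 -> l1 <= 1) ->
    (exists X Xs Xt Xp : Mat,
        posdef n X /\
        mpow_is n X s Xs /\ mpow_is n X (- t) Xt /\ mpow_is n X (- p) Xp /\
        meq n (madd Xs (madd (mmul n (mmul n (madj A) Xt) A)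
                             (mmul n (mmul n (madj B) Xp) B))) Q) ->
    let q := Rmin (t / s) (p / s) in
    (forall r, is_spectral_radius n A r ->
       r ^ 2 < Rpower q q / Rpower (q + 1) (q + 1)) /\
    (forall r, is_spectral_radius n B r ->
       r ^ 2 < Rpower q q / Rpower (q + 1) (q + 1)).
Proof.
move=> n s t p A B Q /RleP s_ge1 /RleP t_ge1 /RleP p_ge1 HA HB [HQ _] lmax_le1
  [X [Xs [Xt [Xp [_ [HXs [HXt [HXp Q_eq]]]]]]]] q.
have pos x : (1 <= x)%O -> (0 < x)%O by apply: lt_le_trans ltr01.
have q_gt0 : (0 < q)%O by apply: min_ratio_pos; apply: pos.
have E := meq_toM Q_eq; rewrite !toM_add !toM_mul !toM_adj in E.
split=> r Hr; rewrite RpowE; apply/RltP.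
- apply: (eigenvalue_bound s_ge1 _ q_gt0 _ HB HQ lmax_le1 HXs HXt HXp (esym E) Hr).
    exact/ltW/pos.
  by apply/min_ratio_le/pos.
- rewrite (addrC ((toM n A)^t* *m _ *m _)) in E.
  apply: (eigenvalue_bound s_ge1 _ q_gt0 _ HA HQ lmax_le1 HXs HXp HXt (esym E) Hr).
    exact/ltW/pos.
  by rewrite /q Rmin_comm; apply/min_ratio_le/pos.
Qed.
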